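(* Let $X\subset\mathbb R^n\setminus\{0\}$ be a finite set such that $0$ lies in the interior of $\operatorname{conv}X$, no element of $X$ is a positive multiple of another element of $X$, and every $n+1$ points of $X$ are in good position. Then there are $k\ge 1$ pairwise disjoint subsets $X_1,\dots,X_k\subseteq X$ such that (i) each $X_i$ is the vertex set of a simplex whose relative interior contains $0$, and (ii) the linear spaces $\operatorname{span}X_1,\dots,\operatorname{span}X_k$ are linearly independent and their direct sum is $\mathbb R^n$.
   Context: The positive hull $\operatorname{pos}A$ is the set of nonnegative linear combinations of elements of $A$. A finite set $A\subset\mathbb R^n$ is in conical position if there is a hyperplane strictly separating $A$ from $0$ (equivalently $0\notin\operatorname{conv}A$) and no point of $A$ lies in the positive hull of the other points of $A$; it is in good position if it is not in conical position. A collection $X_1,\dots,X_k$ as in the conclusion is called a skeleton of $X$. *)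

From HB Require Import structures.
From mathcomp Require Import all_boot all_order all_algebra.
From mathcomp Require Import finmap.
From mathcomp Require Import reals.
Set Implicit Arguments. Unset Strict Implicit. Unset Printing Implicit Defensive.
Import Order.TTheory GRing.Theory Num.Theory.
Local Open Scope ring_scope.
Local Open Scope fset_scope.

Section Defs.
Variables (R : realType) (n : nat).
Local Notation V := 'rV[R]_n.

Definition dotv (u v : V) : R := \sum_(i < n) u 0 i * v 0 i.

Definition in_span (A : {fset V}) (x : V) : Prop :=
  exists w : V -> R, x = \sum_(a <- A) w a *: a.

Definition in_pos (A : {fset V}) (x : V) : Prop :=
  exists w : V -> R, (forall a, a \in A -> 0 <= w a) /\ x = \sum_(a <- A) w a *: a.

Definition in_conv (A : {fset V}) (x : V) : Prop :=
  exists w : V -> R, (forall a, a \in A -> 0 <= w a) /\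
    \sum_(a <- A) w a = 1 /\ x = \sum_(a <- A) w a *: a.

Definition in_aff (A : {fset V}) (x : V) : Prop :=
  exists w : V -> R, \sum_(a <- A) w a = 1 /\ x = \sum_(a <- A) w a *: a.

Definition near_by (eps : R) (x y : V) : Prop := dotv (x - y) (x - y) < eps ^+ 2.

Definition in_interior_conv (A : {fset V}) (x : V) : Prop :=
  exists2 eps : R, 0 < eps & forall y : V, near_by eps y x -> in_conv A y.

Definition in_relint_conv (A : {fset V}) (x : V) : Prop :=
  in_conv A x /\
  exists2 eps : R, 0 < eps &
    forall y : V, in_aff A y -> near_by eps y x -> in_conv A y.

Definition aff_indep (A : {fset V}) : Prop :=
  forall w : V -> R, \sum_(a <- A) w a = 0 -> \sum_(a <- A) w a *: a = 0 ->
    forall a, a \in A -> w a = 0.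

Definition simplex_vertices (A : {fset V}) : Prop :=
  A != fset0 /\ aff_indep A.

Definition conical_position (A : {fset V}) : Prop :=
  (exists (c : V) (t : R), dotv c 0 < t /\ forall a, a \in A -> t < dotv c a) /\
  (forall a, a \in A -> ~ in_pos (A `\ a) a).

Definition good_position (A : {fset V}) : Prop := ~ conical_position A.

End Defs.

From HB Require Import structures.
From mathcomp Require Import all_boot all_order all_algebra.
From mathcomp Require Import finmap.
From mathcomp Require Import reals boolp.
From mathcomp Require Import lra zify.
Set Implicit Arguments. Unset Strict Implicit. Unset Printing Implicit Defensive.
Import Order.TTheory GRing.Theory Num.Theory.
Local Open Scope fset_scope.
Local Open Scope ring_scope.

(* Call C a circuit of X modulo L when no point of C lies in span L, some combination of C
   with positive coefficients lies in span L, and up to scaling it is the only combination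
   of C that does. As X positively spans R^n, such circuits exist as long as span L <> R^n;
   the skeleton is built greedily, adding to L at each step a circuit Y modulo L of maximal
   size.

   The key lemma: every circuit C modulo L ∪ Y has its positive combination already in span
   L. Otherwise, subtracting the right multiple of the relation of Y makes C ∪ T a circuit
   modulo L for some proper subset T of Y, so maximality of Y leaves two points of Y outside
   T. Completing C, Y minus a point of T and a basis of span L to a spanning subset of X
   yields n+1 points of X with a unique linear relation having two positive and two negative
   coefficients; such a set is in conical position, contrary to the hypothesis. By
   induction, each stage of the chain is a circuit modulo the empty set, i.e. a minimal
   positive linear dependence: the vertex set of a simplex containing 0 in its relative
   interior. The spans of the stages are independent since each stage is independent modulo
   the earlier ones. *)

Lemma fset_argmin (R : realDomainType) (T : choiceType) (A : {fset T}) (f : T -> R) x0 :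
  x0 \in A -> exists2 z, z \in A & {in A, forall y, f z <= f y}.
Proof.
move=> x0A; case: (arg_minP (fun y : A => f (val y)) (isT : (fun _ => true) [` x0A])).
by move=> z _ zmin; exists (val z) => [|y yA]; [apply: valP | apply: (zmin [` yA])].
Qed.

Lemma exists_max_ratio (R : realFieldType) (T : choiceType) (Y : {fset T}) (la al : T -> R) y0 :
  y0 \in Y -> {in Y, forall y, 0 < la y} ->
  exists2 s, {in Y, forall y, al y <= s * la y} & exists2 ys, ys \in Y & al ys = s * la ys.
Proof.
move=> y0Y lapos; have [ys ysY ysmax] := fset_argmin (fun y => - (al y / la y)) y0Y.
exists (al ys / la ys) => [y yY|]; last by exists ys; rewrite // divfK // gt_eqF ?lapos.
by rewrite -ler_pdivrMr ?lapos // -lerN2 ysmax.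
Qed.

Lemma fset_two_points (T : choiceType) (A : {fset T}) : (1 < #|`A|)%N ->
  exists x1 x2, [/\ x1 \in A, x2 \in A & x1 != x2].
Proof.
case: (fset_0Vmem A) => [->|[x1 x1A]]; first by rewrite cardfs0.
case: (fset_0Vmem (A `\ x1)) => [A1|[x2]]; first by rewrite (cardfsD1 x1) x1A A1 cardfs0.
by rewrite in_fsetD1 => /andP[x21 x2A]; exists x1, x2; rewrite eq_sym.
Qed.

Lemma sum_fset_gt0 (R : numDomainType) (T : choiceType) (Y : {fset T}) (la : T -> R) :
  Y != fset0 -> {in Y, forall y, 0 < la y} -> 0 < \sum_(y <- Y) la y.
Proof.
case: (fset_0Vmem Y) => [->|[y yY] _ lapos]; first by rewrite eqxx.
rewrite (big_fsetD1 y) //=; apply: ltr_pwDl (lapos y yY) _.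
by rewrite big_seq sumr_ge0 // => z; rewrite in_fsetD1 => /andP[_ /lapos /ltW].
Qed.

Section LinearCombination.
Variables (K : pzRingType) (U : lmodType K).
Implicit Types (A B : {fset U}) (w : U -> K).

Definition lincomb A w : U := \sum_(a <- A) w a *: a.

Lemma eq_lincomb A w w' : {in A, w =1 w'} -> lincomb A w = lincomb A w'.
Proof. by move=> ww'; apply: eq_fbigr => x xA _; rewrite ww'. Qed.

Lemma lincomb_subset A B w : A `<=` B -> {in B, forall x, x \notin A -> w x = 0} ->
  lincomb A w = lincomb B w.
Proof. by move=> AB w0; apply: big_fset_incl => // x xB xA; rewrite w0 // scale0r. Qed.

Lemma lincomb_restrict A B w : A `<=` B ->
  lincomb B (fun x => if x \in A then w x else 0) = lincomb A w.
Proof.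
move=> AB; rewrite -(lincomb_subset AB); last by move=> x _ /negbTE ->.
by apply: eq_lincomb => x ->.
Qed.

Lemma lincombD A w w' : lincomb A (fun x => w x + w' x) = lincomb A w + lincomb A w'.
Proof. by rewrite /lincomb -big_split; apply: eq_bigr => x _; rewrite scalerDl. Qed.

Lemma lincombZ A c w : lincomb A (fun x => c * w x) = c *: lincomb A w.
Proof. by rewrite /lincomb scaler_sumr; apply: eq_bigr => x _; rewrite scalerA. Qed.

Lemma lincombN A w : lincomb A (fun x => - w x) = - lincomb A w.
Proof. by rewrite /lincomb -sumrN; apply: eq_bigr => x _; rewrite scaleNr. Qed.

Lemma lincombB A w w' : lincomb A (fun x => w x - w' x) = lincomb A w - lincomb A w'.
Proof. by rewrite lincombD lincombN. Qed.

Lemma lincomb0 A : lincomb A (fun=> 0) = 0.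
Proof. by rewrite /lincomb big1 // => x _; rewrite scale0r. Qed.

Lemma lincomb_fset0 w : lincomb fset0 w = 0.
Proof. by rewrite /lincomb big_seq_fset0. Qed.

Lemma lincomb_fsetD1 A a w : a \in A -> lincomb A w = w a *: a + lincomb (A `\ a) w.
Proof. by move=> aA; rewrite /lincomb (big_fsetD1 a). Qed.

Lemma lincomb_delta A a : a \in A -> lincomb A (fun x => (x == a)%:R) = a.
Proof.
move=> aA; rewrite (lincomb_fsetD1 _ aA) eqxx scale1r -[RHS]addr0; congr (_ + _).
by rewrite -(lincomb0 (A `\ a)); apply: eq_lincomb => x; rewrite in_fsetD1 => /andP[/negbTE ->].
Qed.

Lemma lincomb_fsetU A B w : [disjoint A & B] ->
  lincomb (A `|` B) w = lincomb A w + lincomb B w.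
Proof.
move=> /fdisjointP dAB; rewrite /lincomb (@big_fsetID _ _ _ _ (mem A)) /=.
congr (_ + _); apply: eq_fbigl => x; rewrite !inE /=.
  by case: (x \in A); rewrite ?andbT ?andbF.
by case: (boolP (x \in A)) => [/dAB/negbTE -> | _]; rewrite ?andbT ?andbF.
Qed.

End LinearCombination.

Section Span.
Variables (R : realType) (n : nat).
Local Notation V := 'rV[R]_n.
Implicit Types (A B : {fset V}) (w : V -> R) (u v : V).

Lemma in_span_lincomb A w : in_span A (lincomb A w).
Proof. by exists w. Qed.

Lemma in_span0 A : in_span A 0.
Proof. by exists (fun=> 0); rewrite -/(lincomb A _) lincomb0. Qed.

Lemma in_spanD A u v : in_span A u -> in_span A v -> in_span A (u + v).
Proof.
by move=> [w ->] [w' ->]; exists (fun x => w x + w' x); rewrite -!/(lincomb A _) lincombD.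
Qed.

Lemma in_spanZ A c v : in_span A v -> in_span A (c *: v).
Proof. by move=> [w ->]; exists (fun x => c * w x); rewrite -!/(lincomb A _) lincombZ. Qed.

Lemma in_spanN A v : in_span A v -> in_span A (- v).
Proof. by rewrite -scaleN1r; apply: in_spanZ. Qed.

Lemma in_spanB A u v : in_span A u -> in_span A v -> in_span A (u - v).
Proof. by move=> Hu /in_spanN; apply: in_spanD. Qed.

Lemma in_spanZr A c v : c != 0 -> in_span A (c *: v) -> in_span A v.
Proof. by move=> c0 /(in_spanZ c^-1); rewrite scalerA mulVf // scale1r. Qed.

Lemma in_span_mem A a : a \in A -> in_span A a.
Proof. by move=> aA; exists (fun x => (x == a)%:R); rewrite -/(lincomb A _) lincomb_delta. Qed.

Lemma in_span_lincomb_supp A B w : {in A, forall a, w a = 0 \/ in_span B a} ->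
  in_span B (lincomb A w).
Proof.
move=> HA; rewrite /lincomb big_seq; apply: (big_ind (in_span B)).
- exact: in_span0.
- exact: in_spanD.
by move=> a /HA [->|Ha]; [rewrite scale0r; apply: in_span0 | apply: in_spanZ].
Qed.

Lemma in_span_trans A B v : {in A, forall a, in_span B a} -> in_span A v -> in_span B v.
Proof. by move=> AB [w ->]; apply: in_span_lincomb_supp => a /AB; right. Qed.

Lemma in_span_subset A B v : A `<=` B -> in_span A v -> in_span B v.
Proof. by move=> /fsubsetP AB; apply: in_span_trans => a /AB /in_span_mem. Qed.

Lemma in_span_fset0 v : in_span fset0 v -> v = 0.
Proof. by move=> [w ->]; rewrite -/(lincomb _ _) lincomb_fset0. Qed.

Lemma in_spanU A B v : in_span (A `|` B) v -> exists w, in_span A (v - lincomb B w).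
Proof.
move=> [w ->]; exists w; rewrite -/(lincomb _ w) /lincomb (@big_fsetID _ _ _ _ (mem B)) /=.
rewrite (@eq_fbigl _ _ _ _ [fset x in A `|` B | x \in B] B); last first.
  by move=> x; rewrite !inE /=; case: (x \in B); rewrite ?orbT ?andbF.
rewrite addrC addrK -/(lincomb _ w); apply: in_span_lincomb_supp => a.
by rewrite !inE /= => /andP[/orP[aA|->//] _]; right; apply: in_span_mem.
Qed.

End Span.

Section Bases.
Variables (R : realType) (n : nat).
Local Notation V := 'rV[R]_n.
Implicit Types (A B P : {fset V}) (w : V -> R) (u v : V).

Lemma dotv0r (c : V) : dotv c 0 = 0.
Proof. by rewrite /dotv big1 // => i _; rewrite mxE mulr0. Qed.

Lemma dotv_ge0 v : 0 <= dotv v v.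
Proof. by apply: sumr_ge0 => i _; rewrite -expr2 sqr_ge0. Qed.

Lemma dotvZZ (a : R) v : dotv (a *: v) (a *: v) = a ^+ 2 * dotv v v.
Proof. by rewrite /dotv big_distrr; apply: eq_bigr => i _; rewrite !mxE expr2 mulrACA. Qed.

Lemma near_by0_coord eps v j : 0 < eps -> near_by eps v 0 -> `|v 0 j| < eps.
Proof.
rewrite /near_by subr0 => eps0 vsmall.
have vj2 : v 0 j ^+ 2 <= dotv v v.
  rewrite /dotv (bigD1 j) //= -expr2 lerDl.
  by apply: sumr_ge0 => i _; rewrite -expr2 sqr_ge0.
by rewrite -ltr_sqr ?nnegrE // ?ltW // real_normK ?num_real //; apply: le_lt_trans vsmall.
Qed.

Definition free_mod A B : Prop :=
  forall w, in_span A (lincomb B w) -> {in B, forall b, w b = 0}.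

Definition fset_mx A : 'M[R]_(#|`A|, n) := \matrix_(i, j) (nth 0 A i) 0 j.

Definition coef_of_row A (r : 'rV[R]_#|`A|) : V -> R :=
  fun x => \sum_(i < #|`A|) (if nth 0 A i == x then r 0 i else 0).

Lemma lincomb_mx A w : lincomb A w = (\row_i w (nth 0 A i)) *m fset_mx A.
Proof.
rewrite /lincomb (big_nth 0) big_mkord mulmx_sum_row; apply: eq_bigr => i _.
by rewrite mxE; congr (_ *: _); apply/rowP => j; rewrite !mxE.
Qed.

Lemma coef_of_row_nth A (r : 'rV[R]_#|`A|) (i : 'I_#|`A|) :
  coef_of_row r (nth 0 A i) = r 0 i.
Proof.
rewrite /coef_of_row (bigD1 i) //= eqxx big1 ?addr0 // => j ji.
by rewrite nth_uniq ?fset_uniq //; case: eqP => // /val_inj ij; rewrite ij eqxx in ji.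
Qed.

Lemma lincomb_coef_of_row A (r : 'rV[R]_#|`A|) : lincomb A (coef_of_row r) = r *m fset_mx A.
Proof. by rewrite lincomb_mx; congr (_ *m _); apply/rowP => i; rewrite mxE coef_of_row_nth. Qed.

Lemma fset_nth_index A a : a \in A -> exists i : 'I_#|`A|, a = nth 0 A i.
Proof.
move=> aA; have ia : (index a A < #|`A|)%N by rewrite index_mem.
by exists (Ordinal ia); rewrite /= nth_index.
Qed.

Lemma card_free_spanning A : free_mod fset0 A -> (forall v, in_span A v) -> #|`A| = n.
Proof.
move=> freeA spanA.
have kerA : kermx (fset_mx A) = 0.
  apply/row_matrixP => i; rewrite row0; apply/rowP => j.
  have rel : lincomb A (coef_of_row (row i (kermx (fset_mx A)))) = 0.
    by rewrite lincomb_coef_of_row -row_mul mulmx_ker row0.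
  have := freeA _ (eq_ind_r _ (in_span0 _) rel) _ (mem_nth 0 (ltn_ord j)).
  by rewrite coef_of_row_nth => ->; rewrite mxE.
have rankA : \rank (fset_mx A) = #|`A|.
  by apply/eqP; rewrite -[_ == _]/(row_free _) -kermx_eq0 kerA.
have : (n <= \rank (fset_mx A))%N.
  rewrite -{1}(mxrank1 R n); apply: mxrankS; apply/row_subP => j.
  by have [w ->] := spanA (row j 1%:M); rewrite -/(lincomb _ _) lincomb_mx submxMl.
by have := rank_leq_col (fset_mx A); rewrite rankA; lia.
Qed.

Lemma dual_vector_exists A (b : V -> R) :
  (forall w, lincomb A w = 0 -> \sum_(a <- A) w a * b a = 0) ->
  exists c : V, {in A, forall a, dotv c a = b a}.
Proof.
move=> bperp; pose bc : 'cV[R]_#|`A| := \col_i b (nth 0 A i).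
have : (bc^T <= (fset_mx A)^T)%MS.
  rewrite submxE; apply/eqP/rowP => j; rewrite !mxE.
  set K := cokermx (fset_mx A)^T.
  have rel : lincomb A (coef_of_row (row j K^T)) = 0.
    by rewrite lincomb_coef_of_row -row_mul -[fset_mx A]trmxK -trmx_mul mulmx_coker trmx0 row0.
  rewrite -[RHS](bperp _ rel) (big_nth 0) big_mkord.
  by apply: eq_bigr => i _; rewrite coef_of_row_nth !mxE mulrC.
case/submxP => c Ec; exists c => a /fset_nth_index [i ->].
have := congr1 (fun M : 'M[R]_(1, #|`A|) => M 0 i) Ec; rewrite !mxE => ->.
by apply: eq_bigr => j _; rewrite !mxE.
Qed.

Lemma small_lincomb_coefs A del : 0 < del -> exists2 eps, 0 < eps &
  forall y, in_span A y -> near_by eps y 0 ->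
    exists w, lincomb A w = y /\ {in A, forall a, `|w a| <= del}.
Proof.
move=> del0; pose G := pinvmx (fset_mx A).
pose K := \sum_(i < n) \sum_(j < #|`A|) `|G i j|.
have K0 : 0 <= K by do 2![apply: sumr_ge0 => ? _]; apply: normr_ge0.
have K1 : 0 < K + 1 by rewrite ltr_wpDl.
exists (del / (K + 1)); first by rewrite divr_gt0.
move=> y [w Ey] ysmall; exists (coef_of_row (y *m G)); split.
  rewrite lincomb_coef_of_row mulmxKpV // Ey -/(lincomb _ _) lincomb_mx submxMl //.
move=> a /fset_nth_index [i ->]; rewrite coef_of_row_nth mxE.
apply: le_trans (ler_norm_sum _ _ _) _.
have yG : forall j, `|y 0 j * G j i| <= del / (K + 1) * `|G j i|.
  move=> j; rewrite normrM ler_wpM2r //; apply/ltW/near_by0_coord => //.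
  by rewrite divr_gt0.
apply: le_trans (ler_sum _ (fun j _ => yG j)) _; rewrite -mulr_sumr.
have GK : \sum_(j < n) `|G j i| <= K + 1.
  apply: (@le_trans _ _ K); last by rewrite lerDl.
  apply: ler_sum => j _; rewrite (bigD1 i) //= lerDl.
  by apply: sumr_ge0 => ? _; apply: normr_ge0.
by rewrite mulrAC ler_pdivrMr // ler_wpM2l // ltW.
Qed.

Lemma exists_basis_mod A P : exists2 B, B `<=` P &
  {in P, forall p, in_span (A `|` B) p} /\ free_mod A B.
Proof.
move: {2}#|`P| (leqnn #|`P|) => k; elim: k P => [|k IH] P HP.
  exists fset0; rewrite ?fsub0set // (cardfs0_eq (_ : #|`P| = 0%N)); last by lia.
  by split => [p|w _ b]; rewrite inE.
case: (fset_0Vmem P) => [->|[p pP]].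
  by exists fset0; rewrite ?fsub0set //; split => [q|w _ b]; rewrite inE.
have HP' : (#|`P `\ p| <= k)%N by move: HP; rewrite (cardfsD1 p) pP.
have [B BP [spanB freeB]] := IH _ HP'.
have pB : p \notin B by apply/negP => /(fsubsetP BP); rewrite in_fsetD1 eqxx.
have BP' : B `<=` P := fsubset_trans BP (fsubsetDl _ _).
have spanP : forall C, B `<=` C -> in_span (A `|` C) p -> {in P, forall q, in_span (A `|` C) q}.
  move=> C BC Cp q qP; case: (eqVneq q p) => [-> //|qp].
  by apply: in_span_subset (fsetUS _ BC) (spanB q _); rewrite in_fsetD1 qp.
case: (pselect (in_span (A `|` B) p)) => Bp; first by exists B => //; split => //; apply: spanP.
exists (p |` B); first by rewrite fsubUset fsub1set pP.
split; first by apply: spanP; [apply: fsubsetU1 | apply: in_span_mem; rewrite !inE eqxx orbT].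
move=> w; rewrite /lincomb big_fsetU1 //= -/(lincomb B w) => spanw.
have wp : w p = 0.
  apply: contra_notP Bp => /eqP wp; apply: (in_spanZr wp).
  rewrite -(addrK (lincomb B w) (w p *: p)); apply: in_spanB.
    exact: in_span_subset (fsubsetUl _ _) spanw.
  by apply: in_span_lincomb_supp => b bB; right; apply: in_span_mem; rewrite in_fsetU bB orbT.
move=> b; rewrite in_fset1U => /orP[/eqP -> //|bB].
by apply: freeB bB; move: spanw; rewrite wp scale0r add0r.
Qed.

End Bases.

Section Circuits.
Variables (R : realType) (n : nat).
Local Notation V := 'rV[R]_n.
Implicit Types (A C L P S Y : {fset V}) (w mu nu : V -> R) (v : V).

Definition proportional_on A nu mu : Prop := exists c, {in A, forall x, nu x = c * mu x}.

Lemma shrink_pos_dependence L S w nu :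
  {in S, forall z, 0 < w z} -> in_span L (lincomb S w) ->
  in_span L (lincomb S nu) -> ~ proportional_on S nu w ->
  exists S2 w2, [/\ S2 `<` S, S2 != fset0, {in S2, forall z, 0 < w2 z}
                  & in_span L (lincomb S2 w2)].
Proof.
move=> wpos spanw.
wlog [z zS nuz] : nu / exists2 z, z \in S & 0 < nu z.
  move=> wlog_pos spannu nonprop.
  case: (pselect (exists2 z, z \in S & 0 < nu z)) => [pos|nu_le0].
    exact: wlog_pos pos spannu nonprop.
  apply: (wlog_pos (fun x => - nu x)).
  - apply: contrapT => nnu_le0; apply: nonprop; exists 0 => x xS; rewrite mul0r.
    apply/eqP; rewrite eq_le !leNgt; apply/andP; split; apply/negP => nux.
      by apply: nu_le0; exists x.
    by apply: nnu_le0; exists x; rewrite // oppr_gt0.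
  - by rewrite lincombN; apply: in_spanN.
  - by move=> [c cnu]; apply: nonprop; exists (- c) => x xS; rewrite mulNr -cnu ?opprK.
move=> spannu nonprop.
have zP : z \in [fset x in S | 0 < nu x] by rewrite !inE /= zS nuz.
have [z0 z0P z0min] := fset_argmin (fun x => w x / nu x) zP.
move: z0P; rewrite !inE /= => /andP[z0S nuz0].
pose s := w z0 / nu z0; pose w2 x := w x - s * nu x.
have w2_ge0 : {in S, forall x, 0 <= w2 x}.
  move=> x xS; rewrite subr_ge0; case: (ltP 0 (nu x)) => nux.
    by rewrite -ler_pdivlMr // z0min // !inE /= xS nux.
  by apply: le_trans (ltW (wpos _ xS)); rewrite mulr_ge0_le0 // ltW // divr_gt0 ?wpos.
pose S2 := [fset x in S | 0 < w2 x].
have w2_eq0 : {in S, forall x, x \notin S2 -> w2 x = 0}.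
  move=> x xS; rewrite !inE /= xS /= => w2x.
  by apply/eqP; rewrite eq_le w2_ge0 // andbT leNgt.
exists S2, w2; split.
- rewrite fproperEneq; apply/andP; split; last by apply/fsubsetP => x; rewrite !inE /= => /andP[].
  apply/eqP => S2S; have : z0 \in S2 by rewrite S2S.
  by rewrite !inE /= z0S /w2 /s divfK ?subrr ?ltxx // gt_eqF.
- apply/eqP => S20; apply: nonprop; exists s^-1 => x xS.
  have := w2_eq0 _ xS; rewrite S20 inE => /(_ isT) /eqP; rewrite subr_eq0 => /eqP ->.
  by rewrite mulrA mulVf ?mul1r // gt_eqF // divr_gt0 ?wpos.
- by move=> x; rewrite !inE /= => /andP[].
rewrite (lincomb_subset _ w2_eq0); last by apply/fsubsetP => x; rewrite !inE /= => /andP[].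
by rewrite lincombB lincombZ; apply: in_spanB => //; apply: in_spanZ.
Qed.

Variable X : {fset V}.

Definition circuit_mod L C mu : Prop :=
  [/\ C `<=` X, {in C, forall x, ~ in_span L x}, {in C, forall x, 0 < mu x},
      in_span L (lincomb C mu) &
      forall nu, in_span L (lincomb C nu) -> proportional_on C nu mu].

Lemma circuit_mod_of_pos_dependence L S w : S `<=` X ->
  {in S, forall z, ~ in_span L z} -> {in S, forall z, 0 < w z} ->
  S != fset0 -> in_span L (lincomb S w) -> exists C mu, C != fset0 /\ circuit_mod L C mu.
Proof.
move: {2}#|`S| (leqnn #|`S|) => k; elim: k S w => [|k IH] S w HS SX SnL wpos S0 spanw.
  by move: S0; rewrite -cardfs_eq0; lia.
case: (pselect (forall nu, in_span L (lincomb S nu) -> proportional_on S nu w)) => Smin.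
  by exists S, w; split => //; split.
have [nu /not_implyP [spannu nonprop]] := (existsNP _).2 Smin.
have [S2 [w2 [S2S S20 w2pos spanw2]]] := shrink_pos_dependence wpos spanw spannu nonprop.
apply: (IH S2 w2) => //.
- by move: (fproper_ltn_card S2S) HS; lia.
- exact: fsubset_trans (fproper_sub S2S) SX.
- by move=> x /(fsubsetP (fproper_sub S2S)); apply: SnL.
Qed.

Hypothesis posX : forall v, in_pos X v.

Lemma exists_circuit_mod L : ~ (forall v, in_span L v) ->
  exists C mu, C != fset0 /\ circuit_mod L C mu.
Proof.
move=> Lnspan.
have [x xX xnL] : exists2 x, x \in X & ~ in_span L x.
  apply: contrapT => XL; apply: Lnspan => v; have [w [_ ->]] := posX v.
  by apply: in_span_lincomb_supp => a aX; right; apply: contrapT => aL; apply: XL; exists a.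
have [w [w_ge0 Ew]] := posX (- x).
pose w' z := w z + (z == x)%:R.
have w'_ge0 : {in X, forall z, 0 <= w' z} by move=> z zX; rewrite addr_ge0 ?w_ge0.
have rel : lincomb X w' = 0 by rewrite lincombD lincomb_delta // /lincomb -Ew addNr.
pose S := [fset z in X | (0 < w' z) && `[< ~ in_span L z >]].
have xS : x \in S.
  by rewrite !inE /= xX ltr_pwDr ?w_ge0 ?eqxx ?ltr01 //=; apply/asboolP.
apply: (@circuit_mod_of_pos_dependence L S w').
- by apply/fsubsetP => z; rewrite !inE /= => /andP[].
- by move=> z; rewrite !inE /= => /and3P[_ _ /asboolP].
- by move=> z; rewrite !inE /= => /and3P[].
- by apply/negP => /eqP S0; move: xS; rewrite S0 inE.
move: rel; rewrite /lincomb (@big_fsetID _ _ _ _ (fun z => (0 < w' z) && `[< ~ in_span L z >])) /=.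
move=> /eqP; rewrite addr_eq0 => /eqP ->; apply/in_spanN/in_span_lincomb_supp => z.
rewrite !inE /= negb_and => /andP[zX /orP[w'z|/asboolPn/contrapT]]; last by right.
by left; apply/eqP; rewrite eq_le w'_ge0 // andbT leNgt.
Qed.

Lemma exists_max_circuit_mod L : ~ (forall v, in_span L v) ->
  exists Y la, [/\ Y != fset0, circuit_mod L Y la &
    forall C mu, circuit_mod L C mu -> (#|`C| <= #|`Y|)%N].
Proof.
move=> /exists_circuit_mod [C0 [mu0 [C00 circC0]]].
pose P k := `[< exists Y la, Y != fset0 /\ circuit_mod L Y la /\ #|`Y| = k >].
have PC0 : P #|`C0| by apply/asboolP; exists C0, mu0.
have Pbound : forall k, P k -> (k <= #|`X|)%N.
  by move=> k /asboolP [Y [la [_ [[YX _ _ _ _] <-]]]]; apply: fsubset_leq_card.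
case: (ex_maxnP (ex_intro P _ PC0) Pbound) => k /asboolP [Y [la [Y0 [circY <-]]]] Ymax.
exists Y, la; split => // C mu circC; case: (eqVneq C fset0) => [->|C_neq0].
  by rewrite cardfs0.
by apply: Ymax; apply/asboolP; exists C, mu.
Qed.

End Circuits.

Section OneRelation.
Variables (R : realType) (n : nat).
Local Notation V := 'rV[R]_n.
Implicit Types (A B W : {fset V}) (sig nu : V -> R).

Definition one_relation W sig : Prop :=
  lincomb W sig = 0 /\ forall nu, lincomb W nu = 0 -> proportional_on W nu sig.

Lemma free_mod_disjoint A B : free_mod A B -> [disjoint A & B].
Proof.
move=> freeAB; apply/fdisjointP => x xA; apply/negP => xB.
have := freeAB (fun z => (z == x)%:R); rewrite lincomb_delta //.
by move=> /(_ (in_span_mem xA) x xB); rewrite eqxx => /eqP; rewrite oner_eq0.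
Qed.

Lemma one_relation_fsetU A B sig : free_mod A B -> {in B, forall b, sig b = 0} ->
  one_relation A sig -> one_relation (A `|` B) sig.
Proof.
move=> freeAB sigB [relA lineA]; have dAB := free_mod_disjoint freeAB.
rewrite /one_relation lincomb_fsetU // relA (eq_lincomb sigB) lincomb0 addr0.
split=> // nu; rewrite lincomb_fsetU // => /eqP; rewrite addr_eq0 => /eqP relAB.
have nuB : {in B, forall b, nu b = 0}.
  by apply: freeAB; rewrite -[lincomb B nu]opprK -relAB; apply/in_spanN/in_span_lincomb.
have [c nuA] : proportional_on A nu sig.
  by apply: lineA; rewrite relAB (eq_lincomb nuB) lincomb0 oppr0.
by exists c => x /fsetUP [/nuA //|xB]; rewrite nuB ?sigB ?mulr0.
Qed.

Lemma card_one_relation W sig x1 : x1 \in W -> sig x1 != 0 ->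
  one_relation W sig -> (forall v, in_span W v) -> #|`W| = n.+1.
Proof.
move=> x1W sigx1 [relW lineW] spanW; rewrite (cardfsD1 x1) x1W; congr (_.+1).
apply: card_free_spanning.
  move=> g /in_span_fset0 relg a; rewrite in_fsetD1 => /andP[ax aW].
  pose g' x := if x == x1 then 0 else g x.
  have [c g'sig] : proportional_on W g' sig.
    apply: lineW; rewrite (lincomb_fsetD1 _ x1W) /g' eqxx scale0r add0r -[RHS]relg.
    by apply: eq_lincomb => x; rewrite in_fsetD1 => /andP[/negbTE ->].
  have := g'sig x1 x1W; rewrite /g' eqxx => /esym /eqP.
  rewrite mulf_eq0 (negbTE sigx1) orbF => /eqP c0.
  by have := g'sig a aW; rewrite /g' (negbTE ax) c0 mul0r.
move=> v; apply: in_span_trans (spanW v) => a aW.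
case: (eqVneq a x1) => [->|ax]; last by apply: in_span_mem; rewrite in_fsetD1 ax aW.
apply: (in_spanZr sigx1); move: relW; rewrite (lincomb_fsetD1 _ x1W) => /eqP.
by rewrite addr_eq0 => /eqP ->; apply/in_spanN/in_span_lincomb.
Qed.

Lemma separated_one_relation W sig x y : x \in W -> y \in W -> 0 < sig x -> sig y < 0 ->
  one_relation W sig ->
  exists (c : V) (t : R), dotv c 0 < t /\ {in W, forall a, t < dotv c a}.
Proof.
move=> xW yW sigx sigy [_ lineW].
pose P := [fset a in W | 0 < sig a]; pose N := [fset a in W | ~~ (0 < sig a)].
pose sP := \sum_(a <- P) sig a; pose sN := - \sum_(a <- N) sig a.
have sP_gt0 : 0 < sP.
  have xP : x \in P by rewrite !inE /= xW sigx.
  rewrite /sP (big_fsetD1 x) //=; apply: ltr_pwDl sigx _.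
  rewrite big_seq sumr_ge0 // => a.
  by rewrite in_fsetD1 !inE /= => /and3P[_ _ /ltW].
have sN_gt0 : 0 < sN.
  have yN : y \in N by rewrite !inE /= yW -leNgt ltW.
  rewrite /sN oppr_gt0 (big_fsetD1 y) //= addrC; apply: ltr_nwDr sigy _.
  rewrite big_seq; apply: sumr_le0 => a; rewrite in_fsetD1 !inE /= -leNgt.
  by case/and3P.
(* [b] is positive and orthogonal to the only relation, hence a linear functional on [W]. *)
pose b a := if 0 < sig a then sN else sP.
have sig_b : \sum_(a <- W) sig a * b a = 0.
  rewrite (@big_fsetID _ _ _ _ (fun a : V => 0 < sig a)) /=.
  rewrite (@eq_fbigr _ _ _ _ _ _ _ (fun a => sig a * sN)); last first.
    by move=> a; rewrite !inE /b => /andP[_ ->].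
  rewrite [X in _ + X](@eq_fbigr _ _ _ _ _ _ _ (fun a => sig a * sP)); last first.
    by move=> a; rewrite !inE /b => /andP[_ /negbTE ->].
  by rewrite -!mulr_suml -/sP -[\sum_(a <- N) sig a]opprK -/sN mulNr mulrC subrr.
have [c bc] : exists c : V, {in W, forall a, dotv c a = b a}.
  apply: dual_vector_exists => nu /lineW [k nusig].
  rewrite (@eq_fbigr _ _ _ _ _ _ _ (fun a => k * (sig a * b a))) -?mulr_sumr ?sig_b ?mulr0 //.
  by move=> a aW _; rewrite nusig // mulrA.
exists c, (Num.min sN sP / 2); split; first by rewrite dotv0r divr_gt0 // lt_min sN_gt0.
move=> a aW; rewrite bc // /b; apply: (@lt_le_trans _ _ (Num.min sN sP)).
  by rewrite ltr_pdivrMr // ltr_pMr ?lt_min ?sN_gt0 // ltr1n.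
by case: ifP; rewrite ge_min lexx ?orbT.
Qed.

Lemma not_in_pos_one_relation W sig x1 x2 y1 y2 :
  x1 \in W -> x2 \in W -> y1 \in W -> y2 \in W -> x1 != x2 -> y1 != y2 ->
  0 < sig x1 -> 0 < sig x2 -> sig y1 < 0 -> sig y2 < 0 -> one_relation W sig ->
  {in W, forall a, ~ in_pos (W `\ a) a}.
Proof.
move=> x1W x2W y1W y2W x12 y12 sx1 sx2 sy1 sy2 [_ lineW] a aW [rho [rho_ge0 Erho]].
pose nu x := if x == a then -1 else rho x.
have [c nusig] : proportional_on W nu sig.
  apply: lineW; rewrite (lincomb_fsetD1 _ aW) /nu eqxx scaleN1r.
  rewrite (eq_lincomb (w' := rho)); first by rewrite /lincomb -Erho addNr.
  move=> x.
  by rewrite in_fsetD1 => /andP[/negbTE ->].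
have other (z1 z2 : V) : z1 != z2 -> exists2 z, (z == z1) || (z == z2) & z != a.
  case: (eqVneq z1 a) => [<- z12|]; last by exists z1; rewrite ?eqxx.
  by exists z2; rewrite 1?eq_sym ?eqxx ?orbT.
have rho_cases z : z \in W -> z != a -> 0 <= c * sig z.
  by move=> zW za; rewrite -nusig // /nu (negbTE za) rho_ge0 // in_fsetD1 za zW.
case: (ltgtP c 0) => [c_lt0|c_gt0|c0].
- have [z /orP[] /eqP -> za] := other _ _ x12.
    by have := rho_cases _ x1W za; rewrite leNgt nmulr_rlt0 // sx1.
  by have := rho_cases _ x2W za; rewrite leNgt nmulr_rlt0 // sx2.
- have [z /orP[] /eqP -> za] := other _ _ y12.
    by have := rho_cases _ y1W za; rewrite leNgt pmulr_rlt0 // sy1.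
  by have := rho_cases _ y2W za; rewrite leNgt pmulr_rlt0 // sy2.
- by have := nusig a aW; rewrite /nu eqxx c0 mul0r => /eqP; rewrite oppr_eq0 oner_eq0.
Qed.

End OneRelation.

Section KeyLemma.
Variables (R : realType) (n : nat) (X : {fset 'rV[R]_n}).
Local Notation V := 'rV[R]_n.
Implicit Types (A C L W Y : {fset V}) (mu nu sig : V -> R).
Hypothesis spanX : forall v, in_span X v.
Hypothesis goodX : forall Y, Y `<=` X -> #|`Y| = n.+1 -> good_position Y.

Lemma no_two_sign_relation W sig x1 x2 y1 y2 : W `<=` X -> (forall v, in_span W v) ->
  one_relation W sig -> x1 \in W -> x2 \in W -> y1 \in W -> y2 \in W ->
  x1 != x2 -> y1 != y2 -> 0 < sig x1 -> 0 < sig x2 -> sig y1 < 0 -> sig y2 < 0 -> False.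
Proof.
move=> WX spanW relW x1W x2W y1W y2W x12 y12 sx1 sx2 sy1 sy2.
case: (goodX WX (card_one_relation x1W (lt0r_neq0 sx1) relW spanW)); split.
  exact: separated_one_relation x1W y1W sx1 sy1 relW.
exact: not_in_pos_one_relation x1W x2W y1W y2W x12 y12 sx1 sx2 sy1 sy2 relW.
Qed.

Lemma card_circuit_mod L C mu : circuit_mod X L C mu -> C != fset0 -> (1 < #|`C|)%N.
Proof.
move=> [_ CnL mupos spanC _]; case: (fset_0Vmem C) => [->|[x xC] _]; first by rewrite eqxx.
rewrite (cardfsD1 x) xC ltnS lt0n cardfs_eq0; apply/negP => /eqP C1.
apply: (CnL x xC); apply: (in_spanZr (lt0r_neq0 (mupos x xC))).
by move: spanC; rewrite (lincomb_fsetD1 _ xC) C1 lincomb_fset0 addr0.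
Qed.

Lemma circuit_mod_fsetU_disjoint L Y C mu : circuit_mod X (L `|` Y) C mu -> [disjoint C & Y].
Proof.
move=> [_ CnLY _ _ _]; apply/fdisjointP => x xC; apply/negP => xY.
by apply: (CnLY x xC); apply: in_span_mem; rewrite in_fsetU xY orbT.
Qed.

Lemma circuit_mod_fsetUl L Y C mu : circuit_mod X (L `|` Y) C mu ->
  {in C, forall x, ~ in_span L x}.
Proof. by move=> [_ CnLY _ _ _] x xC /(in_span_subset (fsubsetUl L Y)); apply: CnLY. Qed.

Section MaximalCircuit.
Variables (L Y : {fset V}) (la : V -> R).
Hypothesis LX : L `<=` X.
Hypothesis circY : circuit_mod X L Y la.

Lemma circuit_mod_merge C mu tau ys : circuit_mod X (L `|` Y) C mu ->
  {in Y, forall y, 0 <= tau y} -> ys \in Y -> tau ys = 0 ->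
  in_span L (lincomb C mu + lincomb Y tau) ->
  circuit_mod X L (C `|` [fset y in Y | 0 < tau y])
    (fun x => if x \in C then mu x else tau x).
Proof.
move=> circC tau_ge0 ysY tauys spanCtau; set T := [fset y in Y | 0 < tau y].
have [YX YnL lapos _ Ymin] := circY; have [CX _ mupos _ Cmin] := circC.
have TY : T `<=` Y by apply/fsubsetP => y; rewrite !inE /= => /andP[].
have tau0 : {in Y, forall y, y \notin T -> tau y = 0}.
  move=> y yY; rewrite !inE /= yY /= => tauy.
  by apply/eqP; rewrite eq_le tau_ge0 // andbT leNgt.
have dCT : [disjoint C & T] := fdisjointWr TY (circuit_mod_fsetU_disjoint circC).
set mu2 := fun x => _.
have mu2C : {in C, mu2 =1 mu} by move=> x xC; rewrite /mu2 xC.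
have mu2T : {in T, mu2 =1 tau}.
  by move=> x xT; rewrite /mu2; case: ifP => // xC; move/fdisjointP: dCT => /(_ x xC); rewrite xT.
have lincombCT nu : lincomb (C `|` T) nu = lincomb C nu + lincomb T nu.
  exact: lincomb_fsetU.
have lincomb_mu2 : lincomb (C `|` T) mu2 = lincomb C mu + lincomb Y tau.
  by rewrite lincombCT (eq_lincomb mu2C) (eq_lincomb mu2T) (lincomb_subset TY tau0).
split.
- by rewrite fsubUset CX (fsubset_trans TY YX).
- move=> x /fsetUP [/(circuit_mod_fsetUl circC) //|/(fsubsetP TY)]; exact: YnL.
- move=> x /fsetUP [xC|xT]; first by rewrite mu2C ?mupos.
  by rewrite mu2T //; move: xT; rewrite !inE /= => /andP[].
- by rewrite lincomb_mu2.
move=> nu spannu.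
have [c nuC] : proportional_on C nu mu.
  apply: Cmin; rewrite -(addrK (lincomb T nu) (lincomb C nu)) -lincombCT.
  apply: in_spanB; first exact: in_span_subset (fsubsetUl _ _) spannu.
  apply: in_span_lincomb_supp => y /(fsubsetP TY) yY; right.
  by apply: in_span_mem; rewrite in_fsetU yY orbT.
pose g x := nu x - c * mu2 x.
have [c' gT] : proportional_on Y (fun y => if y \in T then g y else 0) la.
  apply: Ymin; rewrite lincomb_restrict // -[lincomb T g]add0r.
  rewrite -[X in X + _](lincomb0 C) -(eq_lincomb (w := g)) ?lincombCT; last first.
    by move=> x xC; rewrite /g mu2C // nuC // subrr.
  rewrite -lincombCT lincombB lincombZ lincomb_mu2.
  by apply: in_spanB => //; apply: in_spanZ.
have c'0 : c' = 0.
  have := gT ys ysY; rewrite !inE /= ysY tauys ltxx /= => /esym /eqP.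
  by rewrite mulf_eq0 (gt_eqF (lapos _ ysY)) orbF => /eqP.
exists c => x /fsetUP [xC|xT]; first by rewrite mu2C ?nuC.
have := gT x (fsubsetP TY x xT); rewrite xT c'0 mul0r /g => /eqP.
by rewrite subr_eq0 => /eqP.
Qed.

(* The conical set of the key lemma: [C], [Y] minus [t] and a basis [BL] of [span L],
   completed to a spanning subset of [X]. *)
Section Witness.
Variables (C : {fset V}) (mu h : V -> R) (t : V).
Hypothesis circC : circuit_mod X (L `|` Y) C mu.
Hypothesis tY : t \in Y.
Hypothesis ht : h t = 0.

Local Notation Yt := (Y `\ t).

Lemma lincomb_fsetD1_eq0 nu : nu t = 0 -> lincomb Yt nu = lincomb Y nu.
Proof. by move=> nut; rewrite (lincomb_fsetD1 _ tY) nut scale0r add0r. Qed.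

Section Basis.
Variables (BL : {fset V}) (be : V -> R).
Hypothesis BLL : BL `<=` L.
Hypothesis freeBL : free_mod fset0 BL.
Hypothesis Ebe : lincomb C mu + lincomb Y h = lincomb BL be.

Local Notation A0 := (C `|` Yt `|` BL).

Definition witness_coef x :=
  if x \in C then mu x else if x \in Yt then h x else if x \in BL then - be x else 0.

Lemma witness_support_disjoint : [disjoint C & Yt] /\ [disjoint C `|` Yt & BL].
Proof.
have [_ YnL _ _ _] := circY; split.
  exact: fdisjointWr (fsubsetDl _ _) (circuit_mod_fsetU_disjoint circC).
rewrite fdisjointUX; apply/andP; split; apply/fdisjointP => x xA; apply/negP => xBL.
  by apply: (circuit_mod_fsetUl circC xA); apply: in_span_mem; apply: (fsubsetP BLL).
by apply: (YnL x (fsubsetP (fsubsetDl _ _) x xA)); apply: in_span_mem; apply: (fsubsetP BLL).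
Qed.

Lemma lincomb_witness_support nu :
  lincomb A0 nu = lincomb C nu + lincomb Yt nu + lincomb BL nu.
Proof. by have [dCYt dCYtBL] := witness_support_disjoint; rewrite !lincomb_fsetU. Qed.

Lemma witness_coefE : [/\ {in C, witness_coef =1 mu}, {in Yt, witness_coef =1 h}
  & {in BL, forall x, witness_coef x = - be x}].
Proof.
have [/fdisjointP dCYt /fdisjointP dCYtBL] := witness_support_disjoint.
rewrite /witness_coef; split=> x xA; first by rewrite xA.
  by case: ifP => [xC|_]; [have := dCYt x xC; rewrite xA | rewrite xA].
case: ifP => [xC|_]; first by have := dCYtBL x; rewrite in_fsetU xC xA => /(_ isT).
case: ifP => [xYt|_]; last by rewrite xA.
by have := dCYtBL x; rewrite in_fsetU xYt orbT xA => /(_ isT).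
Qed.

Lemma lincomb_span_basis nu : in_span L (lincomb BL nu).
Proof.
by apply: in_span_lincomb_supp => x xBL; right; apply: in_span_mem; apply: (fsubsetP BLL).
Qed.

Lemma witness_line_support nu : lincomb A0 nu = 0 ->
  exists c, {in C, forall x, nu x = c * mu x} /\ {in Yt, forall y, nu y = c * h y}.
Proof.
have [_ _ lapos _ Ymin] := circY; have [_ _ _ _ Cmin] := circC.
rewrite lincomb_witness_support -addrA => /eqP; rewrite addr_eq0 => /eqP relC.
have [c nuC] : proportional_on C nu mu.
  apply: Cmin; rewrite relC; apply/in_spanN/in_spanD; last first.
    exact: in_span_subset (fsubsetUl _ _) (lincomb_span_basis nu).
  apply: in_span_lincomb_supp => y /(fsubsetP (fsubsetDl _ _)) yY; right.
  by apply: in_span_mem; rewrite in_fsetU yY orbT.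
have [c' nuY] : proportional_on Y (fun y => (if y \in Yt then nu y else 0) - c * h y) la.
  apply: Ymin; rewrite lincombB lincomb_restrict ?fsubsetDl // lincombZ.
  have -> : lincomb Yt nu = - (c *: lincomb C mu) - lincomb BL nu.
    by rewrite -lincombZ -(eq_lincomb nuC) relC opprK addrK.
  have -> : - (c *: lincomb C mu) - lincomb BL nu - c *: lincomb Y h =
            - (c *: lincomb BL be) - lincomb BL nu.
    by rewrite -Ebe scalerDr opprD addrAC.
  by apply: in_spanB; [apply/in_spanN/in_spanZ|]; apply: lincomb_span_basis.
have c'0 : c' = 0.
  have := nuY t tY; rewrite in_fsetD1 eqxx /= ht mulr0 subrr => /esym /eqP.
  by rewrite mulf_eq0 (gt_eqF (lapos _ tY)) orbF => /eqP.
exists c; split=> // y yYt; have := nuY y (fsubsetP (fsubsetDl _ _) y yYt).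
by rewrite yYt c'0 mul0r => /eqP; rewrite subr_eq0 => /eqP.
Qed.

Lemma one_relation_witness : one_relation A0 witness_coef.
Proof.
have [coefC coefYt coefBL] := witness_coefE.
split.
  rewrite lincomb_witness_support (eq_lincomb coefC) (eq_lincomb coefYt).
  by rewrite (eq_lincomb coefBL) lincombN lincomb_fsetD1_eq0 // Ebe subrr.
move=> nu rel; have [c [nuC nuYt]] := witness_line_support rel.
have nuBL : {in BL, forall x, nu x = - c * be x}.
  have relBL : lincomb BL (fun x => nu x + c * be x) = 0.
    rewrite lincombD lincombZ -Ebe scalerDr -!lincombZ -(eq_lincomb nuC).
    rewrite -lincomb_fsetD1_eq0 ?ht ?mulr0 // -(eq_lincomb nuYt) addrC.
    by rewrite -lincomb_witness_support.
  move=> x xBL; have := freeBL (eq_ind_r _ (in_span0 _) relBL) xBL.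
  by move=> /eqP; rewrite addr_eq0 mulNr => /eqP.
exists c => x /fsetUP [/fsetUP [xC|xYt]|xBL].
- by rewrite coefC ?nuC.
- by rewrite coefYt ?nuYt.
- by rewrite coefBL ?nuBL // mulNr mulrN.
Qed.

End Basis.

Hypothesis spanCh : in_span L (lincomb C mu + lincomb Y h).

Lemma no_two_sign_witness x1 x2 y1 y2 : x1 \in C -> x2 \in C -> x1 != x2 ->
  y1 \in Yt -> y2 \in Yt -> y1 != y2 -> h y1 < 0 -> h y2 < 0 -> False.
Proof.
move=> x1C x2C x12 y1Yt y2Yt y12 hy1 hy2.
have [CX _ mupos _ _] := circC; have [YX _ _ _ _] := circY.
have [BL BLL [spanBL freeBL]] := exists_basis_mod fset0 L.
have [be Ebe] : in_span BL (lincomb C mu + lincomb Y h).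
  by apply: in_span_trans spanCh => x /spanBL; rewrite fset0U.
rewrite -/(lincomb BL be) in Ebe.
have [coefC coefYt _] := witness_coefE be BLL.
have [B' B'X [spanB' freeB']] := exists_basis_mod (C `|` Yt `|` BL) X.
set W := C `|` Yt `|` BL `|` B'.
have inW x : x \in C `|` Yt -> x \in W by rewrite !in_fsetU => ->.
have WX : W `<=` X.
  rewrite !fsubUset CX B'X (fsubset_trans (fsubsetDl _ _) YX).
  by rewrite (fsubset_trans BLL LX).
have relW : one_relation W (witness_coef BL be).
  apply: one_relation_fsetU (one_relation_witness BLL freeBL Ebe) => // x xB'.
  have := free_mod_disjoint freeB'; rewrite fdisjoint_sym => /fdisjointP /(_ x xB').
  by rewrite /witness_coef !in_fsetU !negb_or => /andP[/andP[/negbTE -> /negbTE ->] /negbTE ->].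
apply: (no_two_sign_relation WX _ relW (inW x1 _) (inW x2 _) (inW y1 _) (inW y2 _) x12 y12).
all: rewrite ?in_fsetU ?x1C ?x2C ?y1Yt ?y2Yt ?orbT //.
- by move=> v; apply: in_span_trans (spanX v).
- by rewrite coefC ?mupos.
- by rewrite coefC ?mupos.
- by rewrite coefYt.
- by rewrite coefYt.
Qed.

End Witness.

Hypothesis Ymax : forall C mu, circuit_mod X L C mu -> (#|`C| <= #|`Y|)%N.

Lemma card_circuit_mod_merge C mu tau ys : circuit_mod X (L `|` Y) C mu ->
  {in Y, forall y, 0 <= tau y} -> ys \in Y -> tau ys = 0 ->
  in_span L (lincomb C mu + lincomb Y tau) ->
  (#|`C| + #|`[fset y in Y | (0 < tau y)%R]| <= #|`Y|)%N.
Proof.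
move=> circC tau_ge0 ysY tauys spanCtau.
have := Ymax (circuit_mod_merge circC tau_ge0 ysY tauys spanCtau).
rewrite cardfsU (disjoint_fsetI0 _) ?cardfs0 ?subn0 //.
apply: fdisjointWr (circuit_mod_fsetU_disjoint circC).
by apply/fsubsetP => y; rewrite !inE => /andP[].
Qed.

Lemma in_span_circuit_mod_fsetU C mu : circuit_mod X (L `|` Y) C mu -> in_span L (lincomb C mu).
Proof.
move=> circC; apply: contrapT => notL.
have [_ _ lapos spanY _] := circY; have [_ _ mupos spanC _] := circC.
have [al spanal] := in_spanU spanC.
have span_shift s : in_span L (lincomb C mu + lincomb Y (fun y => s * la y - al y)).
  by rewrite lincombB lincombZ addrCA addrC; apply: in_spanD spanal (in_spanZ _ spanY).
have [y0 y0Y] : exists y0, y0 \in Y.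
  case: (fset_0Vmem Y) => [Y0|[y0 ?]]; last by exists y0.
  by case: notL; move: spanal; rewrite Y0 lincomb_fset0 subr0.
have [ts al_le [ys ysY alys]] := exists_max_ratio al y0Y lapos.
pose tau y := ts * la y - al y.
have tau_ge0 : {in Y, forall y, 0 <= tau y} by move=> y yY; rewrite subr_ge0 al_le.
have tauys : tau ys = 0 by rewrite /tau alys subrr.
set T := [fset y in Y | 0 < tau y].
have tau0 : {in Y, forall y, y \notin T -> tau y = 0}.
  move=> y yY; rewrite !inE /= yY /= => tauy.
  by apply/eqP; rewrite eq_le tau_ge0 // andbT leNgt.
have [t tT] : exists t, t \in T.
  case: (fset_0Vmem T) => [T0|[t ?]]; last by exists t.
  case: notL; have /eq_lincomb tauY : {in Y, tau =1 fun=> 0} by move=> y yY; rewrite tau0 // T0.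
  by have := span_shift ts; rewrite tauY lincomb0 addr0.
move: (tT); rewrite !inE /= => /andP[tY taut].
have cardCT := card_circuit_mod_merge circC tau_ge0 ysY tauys (span_shift ts).
have C0 : C != fset0 by apply/eqP => C0; case: notL; rewrite C0 lincomb_fset0; apply: in_span0.
have [x1 [x2 [x1C x2C x12]]] := fset_two_points (card_circuit_mod circC C0).
have [y1 [y2 [y1YT y2YT y12]]] : exists y1 y2, [/\ y1 \in Y `\` T, y2 \in Y `\` T & y1 != y2].
  apply: fset_two_points; rewrite cardfsDS; last by apply/fsubsetP => y; rewrite !inE => /andP[].
  by move: cardCT (card_circuit_mod circC C0); rewrite -/T; lia.
pose kap := al t / la t; pose h y := kap * la y - al y.
have ht : h t = 0 by rewrite /h /kap divfK ?subrr // gt_eqF ?lapos.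
have hneg y : y \in Y `\` T -> y \in Y `\ t /\ h y < 0.
  rewrite in_fsetD => /andP[yT yY]; split.
    by rewrite in_fsetD1 yY andbT; apply: contraNneq yT => ->.
  have := tau0 y yY yT; rewrite /tau => /eqP; rewrite subr_eq0 => /eqP aly.
  rewrite /h -aly -mulrBl pmulr_llt0 ?lapos // subr_lt0 /kap ltr_pdivrMr ?lapos //.
  by rewrite -subr_gt0.
have [y1Yt hy1] := hneg y1 y1YT; have [y2Yt hy2] := hneg y2 y2YT.
have spanCh : in_span L (lincomb C mu + lincomb Y h) := span_shift kap.
by have := no_two_sign_witness circC tY ht spanCh x1C x2C x12 y1Yt y2Yt y12; apply.
Qed.

End MaximalCircuit.
End KeyLemma.

Section Chain.
Variables (R : realType) (n : nat) (X : {fset 'rV[R]_n}).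
Local Notation V := 'rV[R]_n.
Implicit Types (C L Y : {fset V}) (Ys : seq {fset V}) (mu la : V -> R) (v : V).

Definition max_circuit_mod L Y : Prop := Y != fset0 /\ exists la,
  circuit_mod X L Y la /\ forall C mu, circuit_mod X L C mu -> (#|`C| <= #|`Y|)%N.

Fixpoint circuit_chain Ys : Prop :=
  if Ys is Y :: Ys' then circuit_chain Ys' /\ max_circuit_mod (\bigcup_(Z <- Ys') Z) Y
  else True.

Lemma bigfcup_cons Y Ys : \bigcup_(Z <- Y :: Ys) Z = \bigcup_(Z <- Ys) Z `|` Y.
Proof. by rewrite big_cons fsetUC. Qed.

Lemma circuit_chain_sub Ys : circuit_chain Ys -> \bigcup_(Y <- Ys) Y `<=` X.
Proof.
elim: Ys => [|Y Ys IH] /=; first by rewrite big_nil fsub0set.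
by move=> [/IH sub [_ [la [[YX _ _ _ _] _]]]]; rewrite bigfcup_cons fsubUset sub YX.
Qed.

Lemma circuit_mod_fsetUr L Y C mu : circuit_mod X (L `|` Y) C mu ->
  in_span L (lincomb C mu) -> circuit_mod X L C mu.
Proof.
move=> circC spanC; have [CX _ mupos _ Cmin] := circC; split => //.
  exact: circuit_mod_fsetUl circC.
by move=> nu /(in_span_subset (fsubsetUl L Y)); apply: Cmin.
Qed.

Hypothesis posX : forall v, in_pos X v.
Hypothesis goodX : forall Y, Y `<=` X -> #|`Y| = n.+1 -> good_position Y.

Lemma spanX v : in_span X v.
Proof. by have [w [_ ->]] := posX v; exists w. Qed.

Lemma lincomb_circuit_mod_chain Ys C mu : circuit_chain Ys ->
  circuit_mod X (\bigcup_(Y <- Ys) Y) C mu -> lincomb C mu = 0.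
Proof.
elim: Ys C mu => [|Y Ys IH] C mu /=.
  by rewrite big_nil => _ [_ _ _ /in_span_fset0 -> _].
move=> [chainYs [_ [la [circY Ymax]]]]; rewrite bigfcup_cons => circC.
apply: (IH _ _ chainYs); apply: (circuit_mod_fsetUr circC).
by apply: (in_span_circuit_mod_fsetU spanX goodX (circuit_chain_sub chainYs) circY Ymax).
Qed.

Lemma circuit_chain_extend Ys : circuit_chain Ys -> ~ (forall v, in_span (\bigcup_(Y <- Ys) Y) v) ->
  exists Y, circuit_chain (Y :: Ys) /\
    (#|`\bigcup_(Z <- Ys) Z| < #|`\bigcup_(Z <- Y :: Ys) Z|)%N.
Proof.
move=> chainYs nspan.
have [Y [la [Y0 circY Ymax]]] := exists_max_circuit_mod posX nspan.
exists Y; split; first by split=> //; split=> //; exists la.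
have [_ YnL _ _ _] := circY.
have dLY : [disjoint \bigcup_(Z <- Ys) Z & Y].
  by apply/fdisjointP => x xL; apply/negP => /YnL; apply; apply: in_span_mem.
rewrite bigfcup_cons cardfsU (disjoint_fsetI0 dLY) cardfs0 subn0 -[X in (X < _)%N]addn0 ltn_add2l.
by rewrite lt0n cardfs_eq0.
Qed.

Lemma exists_spanning_chain : exists Ys,
  circuit_chain Ys /\ forall v, in_span (\bigcup_(Y <- Ys) Y) v.
Proof.
suff: forall k Ys, circuit_chain Ys -> (#|`X| - #|`\bigcup_(Y <- Ys) Y| <= k)%N ->
  exists Ys', circuit_chain Ys' /\ forall v, in_span (\bigcup_(Y <- Ys') Y) v.
  by move/(_ #|`X| [::] I); apply; apply: leq_subr.
elim=> [|k IH] Ys chainYs bound;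
  case: (pselect (forall v, in_span (\bigcup_(Y <- Ys) Y) v)) => spanYs; try by exists Ys.
all: have [Y [chainY grow]] := circuit_chain_extend chainYs spanYs.
  by have := fsubset_leq_card (circuit_chain_sub chainY); lia.
by apply: (IH (Y :: Ys)) => //; lia.
Qed.

End Chain.

Section Simplex.
Variables (R : realType) (n : nat).
Local Notation V := 'rV[R]_n.
Implicit Types (Y : {fset V}) (la w : V -> R).

Lemma aff_indep_one_relation Y la : Y != fset0 -> {in Y, forall y, 0 < la y} ->
  one_relation Y la -> aff_indep Y.
Proof.
move=> Y0 lapos [_ lineY] w sumw relw a aY; have [c wla] := lineY w relw.
have : c * \sum_(y <- Y) la y = 0.
  by rewrite -[RHS]sumw mulr_sumr big_seq [RHS]big_seq; apply: eq_bigr => y /wla.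
move/eqP; rewrite mulf_eq0 (gt_eqF (sum_fset_gt0 Y0 lapos)) orbF => /eqP c0.
by rewrite wla // c0 mul0r.
Qed.

Lemma relint_pos_relation Y la : Y != fset0 -> {in Y, forall y, 0 < la y} ->
  lincomb Y la = 0 -> in_relint_conv Y 0.
Proof.
move=> Y0 lapos rel; set s := \sum_(y <- Y) la y; have s_gt0 : 0 < s := sum_fset_gt0 Y0 lapos.
pose lh y := la y / s.
have lhpos : {in Y, forall y, 0 < lh y} by move=> y yY; rewrite divr_gt0 ?lapos.
have lhsum : \sum_(y <- Y) lh y = 1 by rewrite -mulr_suml mulfV // gt_eqF.
have lhrel : lincomb Y lh = 0.
  rewrite (eq_lincomb (w' := fun y => s^-1 * la y)) ?lincombZ ?rel ?scaler0 //.
  by move=> y _; rewrite mulrC.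
split; first by exists lh; split => // y /lhpos /ltW.
have [y0 y0Y] : exists y0, y0 \in Y.
  by case: (fset_0Vmem Y) Y0 => [->|[y ?]]; [rewrite eqxx | exists y].
have [z zY zmin] := fset_argmin lh y0Y.
pose q := lh z; have q_gt0 : 0 < q := lhpos z zY.
have q_le1 : q <= 1.
  rewrite -lhsum (big_fsetD1 z) //= lerDl big_seq.
  by apply: sumr_ge0 => y; rewrite in_fsetD1 => /andP[_ /lhpos /ltW].
pose m := #|`Y|%:R : R; have m_ge0 : 0 <= m by [].
pose del := q / (2 * (m + 1)).
have Edel : del * (2 * (m + 1)) = q by rewrite divfK // mulf_neq0 // gt_eqF // ltr_wpDl.
have del_gt0 : 0 < del by rewrite divr_gt0 // mulr_gt0 // ltr_wpDl.
have [eps eps_gt0 small] := small_lincomb_coefs Y del_gt0.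
(* A point of the affine hull near 0 is [lincomb Y cf] with small [cf], and then
   [lh * (1 - sum cf) + cf] are convex weights for it. *)
exists eps => // _ [w [_ ->]] ysmall.
have [cf [Ecf cfsmall]] := small _ (in_span_lincomb Y w) ysmall.
pose S := \sum_(a <- Y) cf a.
have Sbound : `|S| <= m * del.
  apply: le_trans (ler_norm_sum _ _ _) _.
  have -> : m * del = \sum_(a <- Y) del.
    by rewrite big_const_seq count_predT iter_addr_0 mulr_natl.
  by rewrite big_seq [X in _ <= X]big_seq; apply: ler_sum => a /cfsmall.
exists (fun a => lh a * (1 - S) + cf a); split.
- move=> a aY; have := zmin a aY; have := cfsmall a aY; rewrite -/q => cfa lha.
  move: cfa Sbound; rewrite !ler_norml => /andP[cfa _] /andP[_ Sa].
  have := lhpos a aY; nra.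
split.
  by rewrite big_split /= -mulr_suml lhsum mul1r subrK.
rewrite -[RHS]/(lincomb Y _) lincombD (eq_lincomb (w' := fun a => (1 - S) * lh a)); last first.
  by move=> a _; rewrite mulrC.
by rewrite lincombZ lhrel scaler0 add0r Ecf.
Qed.

End Simplex.

Section Skeleton.
Variables (R : realType) (n : nat) (X : {fset 'rV[R]_n}).
Local Notation V := 'rV[R]_n.
Implicit Types (Ys : seq {fset V}) (vs : nat -> V).

Lemma nth_sub_bigfcup Ys i : (i < size Ys)%N -> nth fset0 Ys i `<=` \bigcup_(Y <- Ys) Y.
Proof. by move=> iYs; apply: bigfcup_sup; rewrite ?mem_nth. Qed.

Lemma circuit_chain_disjoint Ys i j : circuit_chain X Ys -> (i < j)%N -> (j < size Ys)%N ->
  [disjoint nth fset0 Ys i & nth fset0 Ys j].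
Proof.
elim: Ys i j => [|Y Ys IH] [|i] [|j] //= [chainYs [_ [la [[_ YnL _ _ _] _]]]] ij jYs.
  apply/fdisjointP => x xY; apply/negP => xj; apply: (YnL x xY); apply: in_span_mem.
  exact: (fsubsetP (nth_sub_bigfcup jYs)).
exact: IH.
Qed.

Lemma in_span_bigfcup Ys x : in_span (\bigcup_(Y <- Ys) Y) x -> exists vs,
  (forall i, (i < size Ys)%N -> in_span (nth fset0 Ys i) (vs i)) /\ x = \sum_(i < size Ys) vs i.
Proof.
elim: Ys x => [|Y Ys IH] x.
  by rewrite big_nil => /in_span_fset0 ->; exists (fun=> 0); rewrite big_ord0.
rewrite bigfcup_cons => /in_spanU [al /IH [vs [spanvs Evs]]].
exists (fun i => if i is j.+1 then vs j else lincomb Y al); split.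
  by case=> [|i] iYs //=; [apply: in_span_lincomb | apply: spanvs].
by rewrite big_ord_recl /= -Evs addrC subrK.
Qed.

Hypothesis posX : forall v, in_pos X v.
Hypothesis goodX : forall Y, Y `<=` X -> #|`Y| = n.+1 -> good_position Y.

Lemma circuit_chain_nth Ys i : circuit_chain X Ys -> (i < size Ys)%N ->
  let Y := nth fset0 Ys i in
  exists la, [/\ Y `<=` X, Y != fset0, {in Y, forall y, 0 < la y} & one_relation Y la].
Proof.
elim: Ys i => [|Y Ys IH] [|i] //= [chainYs [Y0 [la [circY _]]]] iYs; last exact: IH.
have [YX _ lapos _ Ymin] := circY.
have rel := lincomb_circuit_mod_chain posX goodX chainYs circY.
by exists la; split=> //; split=> // nu relnu; apply: Ymin; rewrite relnu; apply: in_span0.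
Qed.

Lemma circuit_chain_indep_seq Ys vs : circuit_chain X Ys ->
  (forall i, (i < size Ys)%N -> in_span (nth fset0 Ys i) (vs i)) ->
  \sum_(i < size Ys) vs i = 0 -> forall i, (i < size Ys)%N -> vs i = 0.
Proof.
elim: Ys vs => [|Y Ys IH] vs //= [chainYs [_ [la [circY _]]]] spanvs.
have [_ _ _ _ Ymin] := circY.
rewrite big_ord_recl /= => sum0.
have [be Ebe] := spanvs 0%N isT; rewrite -/(lincomb Y be) in Ebe.
have [c bela] : proportional_on Y be la.
  apply: Ymin; rewrite -Ebe (_ : vs 0%N = - \sum_(i < size Ys) vs i.+1).
    apply/in_spanN; apply: (big_ind (in_span _)) => //.
    - exact: in_span0.
    - exact: in_spanD.
    move=> i _; have /= spani := spanvs i.+1 (ltn_ord i).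
    exact: in_span_subset (nth_sub_bigfcup (ltn_ord i)) spani.
  by apply/eqP; rewrite -addr_eq0; apply/eqP; exact: sum0.
have vs0 : vs 0%N = 0.
  rewrite Ebe (eq_lincomb bela) lincombZ.
  by rewrite (lincomb_circuit_mod_chain posX goodX chainYs circY) scaler0.
move: sum0; rewrite vs0 add0r => sum0 [|i] iYs //.
exact: (IH (fun j => vs j.+1) chainYs (fun j => spanvs j.+1) sum0 i iYs).
Qed.

Lemma circuit_chain_indep Ys (v : 'I_(size Ys) -> V) : circuit_chain X Ys ->
  (forall i : 'I_(size Ys), in_span (nth fset0 Ys i) (v i)) ->
  \sum_(i < size Ys) v i = 0 -> forall i, v i = 0.
Proof.
move=> chainYs spanv sum0 i; pose vs j := if insub j is Some i then v i else 0.
have vsE (j : 'I_(size Ys)) : vs j = v j by rewrite /vs valK.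
rewrite -vsE; apply: (circuit_chain_indep_seq chainYs) (ltn_ord i).
  by move=> j jYs; have /= -> := vsE (Ordinal jYs); apply: (spanv (Ordinal jYs)).
by rewrite -[RHS]sum0; apply: eq_bigr => j _; rewrite vsE.
Qed.

End Skeleton.

Lemma in_pos_interior_conv0 (R : realType) (n : nat) (X : {fset 'rV[R]_n}) :
  in_interior_conv X 0 -> forall v, in_pos X v.
Proof.
move=> [eps eps_gt0 intX] v; pose d := dotv v v; have d_ge0 : 0 <= d := dotv_ge0 v.
pose del := eps / (1 + d); have del_gt0 : 0 < del by rewrite divr_gt0 // ltr_wpDr.
have Edel : del * (1 + d) = eps by rewrite divfK // gt_eqF // ltr_wpDr.
have : near_by eps (del *: v) 0 by rewrite /near_by subr0 dotvZZ -/d -Edel; nra.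
move/intX => [w [w_ge0 [_ Ew]]]; exists (fun x => w x / del); split.
  by move=> a aX; rewrite divr_ge0 ?w_ge0 // ltW.
rewrite -[v](scalerK (lt0r_neq0 del_gt0)) Ew scaler_sumr.
by apply: eq_bigr => x _; rewrite scalerA mulrC.
Qed.

Lemma interior_conv0_neq0 (R : realType) (n : nat) (X : {fset 'rV[R]_n}) :
  in_interior_conv X 0 -> X != fset0.
Proof.
move=> [eps eps_gt0 /(_ 0)]; rewrite /near_by subr0 dotv0r exprn_gt0 //.
case/(_ isT) => w [_ [sum1 _]]; apply/eqP => X0.
by move: sum1; rewrite X0 big_seq_fset0 => /eqP; rewrite eq_sym oner_eq0.
Qed.

Theorem theorem1p3 (R : realType) (n : nat) (X : {fset 'rV[R]_n}) :
  (0 : 'rV[R]_n) \notin X ->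
  in_interior_conv X 0 ->
  (forall x y, x \in X -> y \in X -> x != y ->
     forall c : R, 0 < c -> y != c *: x) ->
  (forall Y : {fset 'rV[R]_n}, Y `<=` X -> #|` Y| = n.+1 -> good_position Y) ->
  exists (k : nat) (Xs : 'I_k -> {fset 'rV[R]_n}),
    (1 <= k)%N /\
    (forall i, Xs i `<=` X) /\
    (forall i j, i != j -> [disjoint Xs i & Xs j]) /\
    (forall i, simplex_vertices (Xs i) /\ in_relint_conv (Xs i) 0) /\
    (forall v : 'I_k -> 'rV[R]_n, (forall i, in_span (Xs i) (v i)) ->
       \sum_(i < k) v i = 0 -> forall i, v i = 0) /\
    (forall x : 'rV[R]_n, exists v : 'I_k -> 'rV[R]_n,
       (forall i, in_span (Xs i) (v i)) /\ x = \sum_(i < k) v i).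
Proof.
move=> X0 intX _ goodX; have posX := in_pos_interior_conv0 intX.
have [Ys [chainYs spanYs]] := exists_spanning_chain posX.
have stage i := circuit_chain_nth posX goodX chainYs (ltn_ord i).
exists (size Ys), (fun i => nth fset0 Ys i); split.
  case: (fset_0Vmem X) (interior_conv0_neq0 intX) => [->|[x xX] _]; first by rewrite eqxx.
  rewrite lt0n; apply: contraNneq X0 => /size0nil Ys0.
  by have := spanYs x; rewrite Ys0 big_nil => /in_span_fset0 <-.
split; first by move=> i; have [la []] := stage i.
split.
  move=> i j; case: (ltngtP i j) => [ij|ji|/val_inj ->]; rewrite ?eqxx // => _.
    exact: circuit_chain_disjoint chainYs ij (ltn_ord j).
  by rewrite fdisjoint_sym; apply: circuit_chain_disjoint chainYs ji (ltn_ord i).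
split.
  move=> i; have [la [_ Y0 lapos rel]] := stage i.
  by split; [split; last exact: aff_indep_one_relation rel | exact: relint_pos_relation rel.1].
split; first by have := circuit_chain_indep posX goodX chainYs; apply.
move=> x; have [vs [spanvs ->]] := in_span_bigfcup (spanYs x).
by exists (fun i => vs i); split=> // i; apply: spanvs.
Qed.
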